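(* Let $N\ge 1$ patches, indexed $I=1,\dots,N$, be equispaced with macroscale spacing $H>0$ on an $L$-periodic domain, $L=NH$. Each patch carries $n\ge1$ interior lattice points with microscale spacing $d>0$, so the patch width is $h=nd=rH$ with $0<r\le 1$, and the left-next-to-edge point of patch $I$ is at $x^I_1=x^1_1+(I-1)H$. The interior values $u^I_i(t)\in\mathbb{R}$, $i=1,\dots,n$, evolve by $$d^2\partial_t u^I_i=\kappa^I_{i+\frac12}(u^I_{i+1}-u^I_i)+\kappa^I_{i-\frac12}(u^I_{i-1}-u^I_i),\qquad i=1,\dots,n,$$ with real diffusivities $\kappa^I_{i\pm1/2}$ satisfying $\kappa^I_{1/2}=\kappa^J_{n+1/2}$ for all patches $I,J$. The edge values are defined by spectral interpolation $$u^I_{n+1}=\sum_{J=1}^N \mathcal I^{IJ}_{n1}u^J_1,\quad \mathcal I^{IJ}_{n1}=\frac1N\sum_{k\in\mathcal K}e^{\mathrm{i}kH(I-J+r)},\qquad u^I_{0}=\sum_{J=1}^N \mathcal I^{IJ}_{1n}u^J_n,\quad \mathcal I^{IJ}_{1n}=\frac1N\sum_{k\in\mathcal K}e^{\mathrm{i}kH(I-J-r)},$$ where $\mathcal K$ is a fixed finite set of integer multiples of $2\pi/L$ that is symmetric ($k\in\mathcal K\Rightarrow -k\in\mathcal K$). Then all $\mathcal I^{IJ}_{n1},\mathcal I^{IJ}_{1n}$ are real, $\mathcal I^{IJ}_{1n}=\mathcal I^{JI}_{n1}$ for all $I,J$, and the resulting linear system $\partial_t\mathbf u=\mathcal L\mathbf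 u$ for $\mathbf u=(u^1_1,\dots,u^1_n,\dots,u^N_1,\dots,u^N_n)\in\mathbb R^{nN}$ has a real symmetric (hence self-adjoint) matrix $\mathcal L$.
   Context: This is the ''self-adjoint patch scheme'' for 1D heterogeneous lattice diffusion: each patch's edge values $u^I_0$ and $u^I_{n+1}$ are not dynamic variables but are set by interpolating from the next-to-edge values of (possibly all) patches, with the left edge interpolated from the right-next-to-edge values $u^J_n$ and the right edge from the left-next-to-edge values $u^J_1$. Here $\mathrm i=\sqrt{-1}$. A real square matrix is self-adjoint (for the standard inner product) iff it is symmetric. *)

From HB Require Import structures.
From mathcomp Require Import all_boot all_order all_algebra.
From mathcomp Require Import complex.
From mathcomp Require Import reals trigo.
Set Implicit Arguments. Unset Strict Implicit. Unset Printing Implicit Defensive.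
Import Order.TTheory GRing.Theory Num.Theory.
Local Open Scope ring_scope.
Local Open Scope complex_scope.

Definition expi (R : realType) (theta : R) : R[i] := cos theta +i* sin theta.

(* Patches are indexed 0..N-1 (paper: 1..N); only differences I-J matter. *)
Definition interp_n1 (R : realType) (N : nat) (H r : R) (K : seq R) (I J : nat) : R[i] :=
  (N%:R)^-1 * \sum_(k <- K) expi (k * H * (I%:R - J%:R + r)).
Definition interp_1n (R : realType) (N : nat) (H r : R) (K : seq R) (I J : nat) : R[i] :=
  (N%:R)^-1 * \sum_(k <- K) expi (k * H * (I%:R - J%:R - r)).

(* State vector u = (u^1_1..u^1_n, ..., u^N_1..u^N_n) in R^{nN}: the entry
   u^I_i (I = 0..N-1, i = 1..n) is stored at index I*n + (i-1). *)
Definition uval (R : realType) (N n : nat) (u : 'cV[R]_(N * n)) (I i : nat) : R :=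
  if @insub _ (fun m => (m < N * n)%N) _ (I * n + i.-1)%N is Some b then u b 0 else 0.

(* Extended patch values u^I_i for i = 0..n+1 (complex, since the edge values
   are defined through complex interpolation):
   u^I_0     = sum_J I^{IJ}_{1n} u^J_n,
   u^I_{n+1} = sum_J I^{IJ}_{n1} u^J_1,
   u^I_i     = interior value for 1 <= i <= n. *)
Definition uext (R : realType) (N n : nat) (H r : R) (K : seq R)
    (u : 'cV[R]_(N * n)) (I i : nat) : R[i] :=
  if i == 0%N then \sum_(J < N) interp_1n N H r K I J * (uval u J n)%:C
  else if i == n.+1 then \sum_(J < N) interp_n1 N H r K I J * (uval u J 1)%:C
  else (uval u I i)%:C.

(* Right-hand side of the patch scheme,
   d^2 du^I_i/dt = kappa^I_{i+1/2}(u^I_{i+1}-u^I_i) + kappa^I_{i-1/2}(u^I_{i-1}-u^I_i),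
   where kap I j = kappa^I_{j+1/2} (j = 0..n). *)
Definition rhs (R : realType) (N n : nat) (d H r : R) (K : seq R)
    (kap : nat -> nat -> R) (u : 'cV[R]_(N * n)) : 'cV[R[i]]_(N * n) :=
  \col_(a < N * n)
    (let I := (a %/ n)%N in let i := (a %% n).+1 in
     ((kap I i)%:C * (uext H r K u I i.+1 - uext H r K u I i)
      + (kap I i.-1)%:C * (uext H r K u I i.-1 - uext H r K u I i))
     / ((d ^+ 2)%:C)).

From HB Require Import structures.
From mathcomp Require Import all_boot all_order all_algebra.
From mathcomp Require Import complex.
From mathcomp Require Import reals trigo.
From mathcomp Require Import ring lra.
Set Implicit Arguments. Unset Strict Implicit. Unset Printing Implicit Defensive.
Import Order.TTheory GRing.Theory Num.Theory.
Local Open Scope ring_scope.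
Local Open Scope complex_scope.

(* 1. Because the wavenumber set K is symmetric (and duplicate free), summing
      an odd phase over K kills the sine parts: sum_k e^{i phi(k)} is the real
      number sum_k cos (phi k).  Hence both interpolation coefficients are real,
      and since cos is even, I^{IJ}_{1n} = I^{JI}_{n1}.
   2. Writing the global index of u^I_i as a = I*n + (i-1), the right-hand side
      of the scheme is linear in u; its value on the a-th basis vector is
      computed explicitly, which yields a real matrix [scheme_matrix] with
      rhs u = scheme_matrix *m u, and shows this matrix is the only one.
   3. Off the diagonal, the entry (a,b) of the matrix is the flux coefficient
      kappa times the weight with which u_b enters a neighbour of point a.  A
      right-edge weight I_{n1} of point a matches the left-edge weight I_{1n}
      of point b by step 1, and kappa_{1/2} = kappa_{n+1/2} matches the
      diffusivities; interior neighbours match trivially. *)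

Lemma big_expi (R : realType) (s : seq R) (phi : R -> R) :
  \sum_(k <- s) expi (phi k)
  = (\sum_(k <- s) cos (phi k)) +i* (\sum_(k <- s) sin (phi k)).
Proof. by elim: s => [|k s IH]; rewrite ?big_nil // !big_cons IH. Qed.

Section SymmetricSpectrum.
Variables (R : realType) (K : seq R).
Hypothesis K_uniq : uniq K.
Hypothesis K_sym : forall k, k \in K -> - k \in K.

Lemma opp_perm : perm_eq (map -%R K) K.
Proof.
apply: uniq_perm => //; first by rewrite (map_inj_uniq oppr_inj).
move=> x; rewrite -{1}(opprK x) (mem_map oppr_inj).
by apply/idP/idP => /K_sym; rewrite ?opprK.
Qed.

Lemma big_opp_sym (V : zmodType) (f : R -> V) :
  \sum_(k <- K) f (- k) = \sum_(k <- K) f k.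
Proof. by rewrite -(big_map -%R xpredT f); apply: perm_big; exact: opp_perm. Qed.

Lemma sum_expi_odd (phi : R -> R) : (forall k, phi (- k) = - phi k) ->
  \sum_(k <- K) expi (phi k) = (\sum_(k <- K) cos (phi k))%:C.
Proof.
move=> phi_odd; rewrite big_expi; congr (_ +i* _).
have sin_sum_opp : \sum_(k <- K) sin (phi k) = - \sum_(k <- K) sin (phi k).
  rewrite -[LHS](big_opp_sym (fun k => sin (phi k))) -sumrN.
  by apply: eq_bigr => k _; rewrite phi_odd sinN.
lra.
Qed.

End SymmetricSpectrum.

Section Interpolation.
Variables (R : realType) (N : nat) (H r : R) (K : seq R).
Hypothesis K_uniq : uniq K.
Hypothesis K_sym : forall k, k \in K -> - k \in K.

Definition coef_n1 (I J : nat) : R :=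
  (N%:R)^-1 * \sum_(k <- K) cos (k * H * (I%:R - J%:R + r)).
Definition coef_1n (I J : nat) : R :=
  (N%:R)^-1 * \sum_(k <- K) cos (k * H * (I%:R - J%:R - r)).

Lemma interp_n1E (I J : nat) : interp_n1 N H r K I J = (coef_n1 I J)%:C.
Proof.
rewrite /interp_n1 (sum_expi_odd K_uniq K_sym); last by move=> k; rewrite !mulNr.
by rewrite rmorphM fmorphV rmorph_nat.
Qed.

Lemma interp_1nE (I J : nat) : interp_1n N H r K I J = (coef_1n I J)%:C.
Proof.
rewrite /interp_1n (sum_expi_odd K_uniq K_sym); last by move=> k; rewrite !mulNr.
by rewrite rmorphM fmorphV rmorph_nat.
Qed.

Lemma coef_1n_transpose (I J : nat) : coef_1n I J = coef_n1 J I.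
Proof.
rewrite /coef_1n /coef_n1; congr (_ * _).
rewrite -(big_opp_sym K_uniq K_sym (fun k => cos (k * H * (J%:R - I%:R + r)))).
by apply: eq_bigr => k _; congr cos; ring.
Qed.

End Interpolation.

Section PatchIndex.
Variable n : nat.
Hypothesis n_gt0 : (0 < n)%N.

Lemma eq_patch_index (J k b : nat) : (k < n)%N ->
  (J * n + k == b)%N = (J == b %/ n)%N && (k == b %% n)%N.
Proof.
move=> lt_kn; apply/eqP/andP => [<-|[/eqP -> /eqP ->]]; last by rewrite -divn_eq.
by rewrite divnMDl // modnMDl divn_small // modn_small // addn0.
Qed.

Lemma modnS_cases (a : nat) :
  (a.+1 %% n = if (a %% n).+1 == n then 0 else (a %% n).+1)%N.
Proof.
rewrite {1}(divn_eq a n) -addnS modnMDl; case: eqP => [->|ne]; first exact: modnn.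
by rewrite modn_small // ltn_neqAle ltn_pmod // andbT; apply/eqP.
Qed.

Lemma divnS_inside (a : nat) : (a %% n).+1 != n -> (a.+1 %/ n = a %/ n)%N.
Proof.
move=> ne; have lt_n : ((a %% n).+1 < n)%N by rewrite ltn_neqAle ltn_pmod // andbT.
by rewrite {1}(divn_eq a n) -addnS divnMDl // (divn_small lt_n) addn0.
Qed.

End PatchIndex.

Section PatchScheme.
Variables (R : realType) (N n : nat) (H r d : R) (K : seq R).
Variable kap : nat -> nat -> R.
Hypothesis K_uniq : uniq K.
Hypothesis K_sym : forall k, k \in K -> - k \in K.
Hypothesis n_gt0 : (0 < n)%N.

Definition basis_vec (b : 'I_(N * n)) : 'cV[R]_(N * n) := delta_mx b 0.

Lemma uval_basis (b : 'I_(N * n)) (J k : nat) : (J < N)%N -> (0 < k <= n)%N ->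
  uval (basis_vec b) J k = ((J * n + k.-1)%N == b)%:R.
Proof.
move=> lt_JN /andP[k_gt0 le_kn].
have lt_idx : (J * n + k.-1 < N * n)%N.
  apply: (@leq_trans (J.+1 * n)); last by rewrite leq_mul2r lt_JN orbT.
  by rewrite mulSn addnC ltn_add2r prednK.
rewrite /uval /basis_vec; case: insubP => [x _ val_x|]; last by rewrite lt_idx.
by rewrite !mxE eqxx andbT -val_eqE /= val_x.
Qed.

Lemma interp_basis (c : nat -> R[i]) (b : 'I_(N * n)) (k : nat) :
  (0 < k <= n)%N ->
  \sum_(J < N) c J * (uval (basis_vec b) J k)%:C
  = c (b %/ n)%N * ((k.-1 == b %% n)%N%:R)%:C.
Proof.
move=> k_range.
have lt_k1 : (k.-1 < n)%N by case/andP: k_range => k_gt0 ?; rewrite prednK.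
have lt_bN : (b %/ n < N)%N by rewrite ltn_divLR.
rewrite (bigD1 (Ordinal lt_bN)) //= big1 ?addr0.
  by rewrite uval_basis // eq_patch_index // eqxx.
move=> J neJ; rewrite uval_basis // eq_patch_index //.
case: eqP => [eJ|]; last by rewrite mulr0.
by move: neJ; rewrite -val_eqE /= eJ eqxx.
Qed.

(* Weights with which u_b enters the right and left neighbours of point a:
   at a patch edge they are interpolation coefficients, inside the patch
   they select the adjacent lattice point. *)
Definition right_weight (a b : nat) : R :=
  if ((a %% n).+1 == n)%N then coef_n1 N H r K (a %/ n) (b %/ n) * (0 == b %% n)%N%:R
  else (a.+1 == b)%N%:R.
Definition left_weight (a b : nat) : R :=
  if (a %% n == 0)%N then coef_1n N H r K (a %/ n) (b %/ n) * (n.-1 == b %% n)%N%:R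
  else (a.-1 == b)%N%:R.

Definition scheme_entry (a b : nat) : R :=
  (kap (a %/ n) (a %% n).+1 * (right_weight a b - (a == b)%N%:R)
   + kap (a %/ n) (a %% n) * (left_weight a b - (a == b)%N%:R)) / d ^+ 2.

Definition scheme_matrix : 'M[R]_(N * n) := \matrix_(a, b) scheme_entry a b.

Lemma uext_basis_here (a b : 'I_(N * n)) :
  uext H r K (basis_vec b) (a %/ n) (a %% n).+1 = ((a == b :> nat)%:R)%:C.
Proof.
have lt_aN : (a %/ n < N)%N by rewrite ltn_divLR.
rewrite /uext /= eqSS (ltn_eqF (ltn_pmod a n_gt0)) uval_basis ?ltn_pmod //=.
by rewrite -divn_eq.
Qed.

Lemma uext_basis_right (a b : 'I_(N * n)) :
  uext H r K (basis_vec b) (a %/ n) (a %% n).+2 = (right_weight a b)%:C.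
Proof.
have lt_aN : (a %/ n < N)%N by rewrite ltn_divLR.
rewrite /uext /= eqSS /right_weight; case: ifP => edge.
  by rewrite interp_basis //= (interp_n1E _ _ _ K_uniq K_sym) -rmorphM.
rewrite uval_basis //=; last by rewrite ltn_neqAle ltn_pmod // andbT edge.
by rewrite addnS -divn_eq.
Qed.

Lemma uext_basis_left (a b : 'I_(N * n)) :
  uext H r K (basis_vec b) (a %/ n) (a %% n) = (left_weight a b)%:C.
Proof.
have lt_aN : (a %/ n < N)%N by rewrite ltn_divLR.
rewrite /uext /left_weight; case: ifP => edge.
  by rewrite interp_basis ?n_gt0 ?leqnn //= (interp_1nE _ _ _ K_uniq K_sym) -rmorphM.
rewrite (ltn_eqF (leq_trans (ltn_pmod a n_gt0) (leqnSn _))).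
rewrite uval_basis //; last by rewrite lt0n edge ltnW ?ltn_pmod.
congr ((_ == _)%:R)%:C; rewrite {3}(divn_eq a n).
move: edge => /negbT; rewrite -lt0n.
by move: (a %% n)%N (a %/ n * n)%N => x y x_gt0; rewrite -(prednK x_gt0) addnS.
Qed.

Lemma rhs_basis (a b : 'I_(N * n)) :
  rhs d H r K kap (basis_vec b) a 0 = (scheme_entry a b)%:C.
Proof.
rewrite /rhs mxE /= uext_basis_right uext_basis_here uext_basis_left.
by rewrite /scheme_entry -fmorphV -!rmorphB -!rmorphM -rmorphD -rmorphM.
Qed.

Lemma uvalD (u v : 'cV[R]_(N * n)) (J k : nat) :
  uval (u + v) J k = uval u J k + uval v J k.
Proof. by rewrite /uval; case: insub => [x|]; rewrite ?mxE ?addr0. Qed.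

Lemma uvalZ (c : R) (u : 'cV[R]_(N * n)) (J k : nat) :
  uval (c *: u) J k = c * uval u J k.
Proof. by rewrite /uval; case: insub => [x|]; rewrite ?mxE ?mulr0. Qed.

Lemma uextD (u v : 'cV[R]_(N * n)) (I k : nat) :
  uext H r K (u + v) I k = uext H r K u I k + uext H r K v I k.
Proof.
rewrite /uext; case: ifP => _; last case: ifP => _; last by rewrite uvalD rmorphD.
all: by rewrite -big_split; apply: eq_bigr => J _; rewrite uvalD rmorphD mulrDr.
Qed.

Lemma uextZ (c : R) (u : 'cV[R]_(N * n)) (I k : nat) :
  uext H r K (c *: u) I k = c%:C * uext H r K u I k.
Proof.
rewrite /uext; case: ifP => _; last case: ifP => _; last by rewrite uvalZ rmorphM.
all: by rewrite mulr_sumr; apply: eq_bigr => J _; rewrite uvalZ rmorphM mulrCA.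
Qed.

Lemma rhsD (u v : 'cV[R]_(N * n)) (a : 'I_(N * n)) :
  rhs d H r K kap (u + v) a 0 = rhs d H r K kap u a 0 + rhs d H r K kap v a 0.
Proof. by rewrite /rhs !mxE /= !uextD; ring. Qed.

Lemma rhsZ (c : R) (u : 'cV[R]_(N * n)) (a : 'I_(N * n)) :
  rhs d H r K kap (c *: u) a 0 = c%:C * rhs d H r K kap u a 0.
Proof. by rewrite /rhs !mxE /= !uextZ; ring. Qed.

Lemma rhs_expand (u : 'cV[R]_(N * n)) (a : 'I_(N * n)) :
  rhs d H r K kap u a 0
  = \sum_(b < N * n) (u b 0)%:C * rhs d H r K kap (basis_vec b) a 0.
Proof.
have rhs0 : rhs d H r K kap 0 a 0 = 0.
  by rewrite -(scale0r (0 : 'cV[R]_(N * n))) rhsZ mul0r.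
rewrite {1}(matrix_sum_delta u).
apply: (big_ind2 (fun x y => rhs d H r K kap x a 0 = y)) => //.
  by move=> x1 x2 y1 y2 <- <-; rewrite rhsD.
move=> b _; rewrite big_ord1 rhsZ /basis_vec.
by congr (_ * rhs _ _ _ _ _ _ _ _); rewrite (ord1 _).
Qed.

Lemma rhs_scheme_matrix (u : 'cV[R]_(N * n)) :
  rhs d H r K kap u = map_mx (real_complex R) (scheme_matrix *m u).
Proof.
apply/matrixP => a j; rewrite (ord1 j) [RHS]mxE rhs_expand mxE rmorph_sum.
by apply: eq_bigr => b _; rewrite rhs_basis mxE mulrC -rmorphM.
Qed.

Lemma scheme_matrix_unique (Lm : 'M[R]_(N * n)) :
  (forall u, rhs d H r K kap u = map_mx (real_complex R) (Lm *m u)) ->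
  Lm = scheme_matrix.
Proof.
move=> Lm_rhs; apply/matrixP => a b.
move: (Lm_rhs (basis_vec b)) => /matrixP/(_ a 0).
rewrite rhs_basis !mxE => /complexI ->.
rewrite (bigD1 b) //= big1 ?addr0; first by rewrite /basis_vec mxE !eqxx mulr1.
by move=> c ne_cb; rewrite /basis_vec mxE (negbTE ne_cb) mulr0.
Qed.

Hypothesis kap_periodic :
  forall I J, (I < N)%N -> (J < N)%N -> kap I 0%N = kap J n.

Lemma flux_balance (a b : nat) : (a < N * n)%N -> (b < N * n)%N ->
  kap (a %/ n) (a %% n).+1 * right_weight a b
  = kap (b %/ n) (b %% n) * left_weight b a.
Proof.
move=> lt_a lt_b.
have lt_aN : (a %/ n < N)%N by rewrite ltn_divLR.
have lt_bN : (b %/ n < N)%N by rewrite ltn_divLR.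
have b_gt0 : (b %% n != 0)%N -> (0 < b)%N.
  by move=> ne; rewrite lt0n; apply: contraNneq ne => ->; rewrite mod0n.
(* Case split on a being a right-edge point and b a left-edge point: when
   both are, the weights are matching interpolation coefficients; when only
   one is, both weights vanish; when neither is, both select b = a + 1. *)
rewrite /right_weight /left_weight.
have [a_edge|a_in] := eqVneq (a %% n).+1 n; have [b_edge|b_in] := eqVneq (b %% n)%N 0%N.
- have -> : (n.-1 == a %% n)%N = true by rewrite -(f_equal predn a_edge) eqxx.
  by rewrite !mulr1 coef_1n_transpose // a_edge b_edge (kap_periodic lt_bN lt_aN).
- rewrite !mulr0; case: eqP => [ab|]; last by rewrite mulr0.
  have b_pos := b_gt0 b_in.
  by move: b_in; rewrite -(prednK b_pos) ab (modnS_cases n_gt0) a_edge eqxx.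
- have -> : (a.+1 == b)%N = false.
    apply/negbTE; apply: contraNneq a_in => ab.
    by move: b_edge; rewrite -ab (modnS_cases n_gt0); case: ifP.
  have -> : (n.-1 == a %% n)%N = false.
    by apply/negbTE; apply: contraNneq a_in => <-; rewrite prednK.
  by rewrite !mulr0.
- have -> : (b.-1 == a)%N = (a.+1 == b)%N.
    by apply/eqP/eqP => [<-|<-]; rewrite ?prednK ?b_gt0.
  case: eqP => [<-|]; last by rewrite !mulr0.
  by rewrite (divnS_inside n_gt0 a_in) (modnS_cases n_gt0 a) (negbTE a_in).
Qed.

Lemma scheme_entry_sym (a b : nat) : (a < N * n)%N -> (b < N * n)%N ->
  scheme_entry a b = scheme_entry b a.
Proof.
move=> lt_a lt_b; have [<-//|ne] := eqVneq a b.
rewrite /scheme_entry (negbTE ne) eq_sym (negbTE ne) !subr0.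
by rewrite (flux_balance lt_a lt_b) (flux_balance lt_b lt_a) addrC.
Qed.

Lemma scheme_matrix_sym : scheme_matrix^T = scheme_matrix.
Proof. by apply/matrixP => a b; rewrite !mxE scheme_entry_sym. Qed.

End PatchScheme.

Unset Implicit Arguments.

Theorem lemma1 (R : realType) (N n : nat) (H L d h r : R) (K : seq R)
    (kap : nat -> nat -> R)
    (hN : (0 < N)%N) (hn : (0 < n)%N)
    (hH : 0 < H) (hL : L = N%:R * H) (hd : 0 < d)
    (hh : h = n%:R * d) (hhr : h = r * H) (hr0 : 0 < r) (hr1 : r <= 1)
    (hKuniq : uniq K)
    (hKint : forall k, k \in K -> exists m : int, k = m%:~R * (2 * pi / L))
    (hKsym : forall k, k \in K -> - k \in K)
    (hkap : forall I J, (I < N)%N -> (J < N)%N -> kap I 0%N = kap J n) :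
  (forall I J : 'I_N,
      Im (interp_n1 N H r K I J) = 0 /\ Im (interp_1n N H r K I J) = 0)
  /\ (forall I J : 'I_N, interp_1n N H r K I J = interp_n1 N H r K J I)
  /\ (exists Lm : 'M[R]_(N * n),
        forall u : 'cV[R]_(N * n),
          rhs d H r K kap u = map_mx (real_complex R) (Lm *m u))
  /\ (forall Lm : 'M[R]_(N * n),
        (forall u : 'cV[R]_(N * n),
           rhs d H r K kap u = map_mx (real_complex R) (Lm *m u)) ->
        Lm^T = Lm).
Proof.
have interp_n1_real := interp_n1E N H r hKuniq hKsym.
have interp_1n_real := interp_1nE N H r hKuniq hKsym.
split; [|split; [|split]].
- move=> I J; rewrite interp_n1_real interp_1n_real.
  by split; apply/Creal_ImP/complex_realP; eexists.
- move=> I J; rewrite interp_n1_real interp_1n_real.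
  by rewrite (coef_1n_transpose N H r hKuniq hKsym).
- exists (scheme_matrix N n H r d K kap).
  exact: (rhs_scheme_matrix H r d kap hKuniq hKsym hn).
- move=> Lm /(scheme_matrix_unique hKuniq hKsym hn) ->.
  exact: (scheme_matrix_sym H r d hKuniq hKsym hn hkap).
Qed.
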